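(* Let $F$ be a field of characteristic two and let $(A,\sigma)$ be a central simple $F$-algebra with orthogonal involution. If $(A,\sigma)\otimes(M_2(F),\tau)\simeq(M_{2^n}(F),t)$ for some orthogonal involution $\tau$ on $M_2(F)$, then $(A,\sigma)\simeq(M_{2^{n-1}}(F),t)$.
   Context: Involutions are of the first kind; $t$ denotes the transpose involution; $\simeq$ is isomorphism of algebras with involution. *)

From HB Require Import structures.
From mathcomp Require Import all_boot all_order all_algebra all_field.
Set Implicit Arguments. Unset Strict Implicit. Unset Printing Implicit Defensive.
Import GRing.Theory.
Local Open Scope ring_scope.

Definition central_simple (F : fieldType) (A : falgType F) : Prop :=
  (forall z : A, (forall x : A, z * x = x * z) -> exists k : F, z = k%:A) /\
  (forall I : {vspace A},
      (forall a x : A, x \in I -> (a * x \in I) && (x * a \in I)) ->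
      I = 0%VS \/ I = fullv).

Definition involution1 (F : fieldType) (A : lalgType F) (s : A -> A) : Prop :=
  [/\ forall (k : F) (x y : A), s (k *: x + y) = k *: s x + s y,
      forall x y : A, s (x * y) = s y * s x &
      forall x : A, s (s x) = x].

(* Orthogonal involution in characteristic 2 (KMRT Def. 2.5 / Prop. 2.6):
   an involution of the first kind that is not symplectic, i.e.
   1 is not in Symd(A,s) = { x + s x }. *)
Definition orthogonal_involution (F : fieldType) (A : lalgType F) (s : A -> A)
  : Prop :=
  involution1 s /\ ~ (exists x : A, x + s x = 1).

(* Under the canonical identification A (x)_F M_2(F) = M_2(A)
   (a (x) e_ij |-> the matrix with a in position (i,j)), the tensor product
   involution s (x) tau, given by a (x) X |-> s a (x) tau X. *)
Definition tensor_inv2 (F : fieldType) (A : falgType F) (s : A -> A)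
  (tau : 'M[F]_2 -> 'M[F]_2) (M : 'M[A]_2) : 'M[A]_2 :=
  \matrix_(k < 2, l < 2)
     \sum_(i < 2) \sum_(j < 2) (tau (delta_mx i j) k l) *: s (M i j).

Definition iso_M2A_transpose (F : fieldType) (A : falgType F) (s : A -> A)
  (tau : 'M[F]_2 -> 'M[F]_2) (m : nat) : Prop :=
  exists f : 'M[A]_2 -> 'M[F]_m,
    bijective f /\
    [/\ forall M N, f (M + N) = f M + f N,
        forall (k : F) M, f (map_mx (fun a => k *: a) M) = k *: f M,
        forall M N, f (M *m N) = f M *m f N,
        f 1%:M = 1%:M &
        forall M, f (tensor_inv2 s tau M) = (f M)^T].

Definition iso_transpose (F : fieldType) (A : falgType F) (s : A -> A)
  (m : nat) : Prop :=
  exists g : A -> 'M[F]_m,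
    [/\ bijective g,
        forall (k : F) (x y : A), g (k *: x + y) = k *: g x + g y,
        forall x y : A, g (x * y) = g x *m g y,
        g 1 = 1%:M &
        forall x : A, g (s x) = (g x)^T].

(* In characteristic 2 an orthogonal involution [tau] of M_2(F) is adjoint to a
   symmetric non-alternating bilinear form, hence fixes a rank-one idempotent
   [e = u w^T].  Its image [P = f (1 (x) e)] under the isomorphism
   [f : (M_2(A), sigma (x) tau) ~= (M_N(F), t)] is a symmetric idempotent
   commuting with [f (A (x) 1)], of rank N/2 because [e] and [1 - e] are
   equivalent idempotents, and [P M_N(F) P = f (A (x) 1) P] is a copy of [A].
   The dot product restricted to the image of [P] is not alternating: otherwise
   [P = X + X^T] and compressing [X] yields [a] with [a + sigma a = 1],
   contradicting the orthogonality of [sigma].  A non-alternating restriction of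
   the dot product in characteristic 2 has an orthonormal basis [U], and
   [a |-> U^T f (a (x) 1) U] is the required isomorphism onto (M_{N/2}(F), t). *)

From HB Require Import structures.
From mathcomp Require Import all_boot all_order all_algebra all_field.
From mathcomp Require Import ring zify.
Set Implicit Arguments. Unset Strict Implicit. Unset Printing Implicit Defensive.
Import GRing.Theory.
Local Open Scope ring_scope.

Section Involution.
Variables (F : fieldType) (A : lalgType F) (s : A -> A).
Hypothesis s_inv : involution1 s.

Lemma involution1_linear : linear s.
Proof. by case: s_inv. Qed.

HB.instance Definition _ := GRing.isLinear.Build F A A *:%R s involution1_linear.

Lemma involution1_1 : s 1 = 1.
Proof.
case: s_inv => _ sM sK; have := sM (s 1) 1.
by rewrite mulr1 sK mulr1 => /esym.
Qed.

Lemma involution1_alg k : s k%:A = k%:A.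
Proof. by rewrite linearZ /= involution1_1. Qed.

End Involution.

Section SymmetricMatrices.
Variables (F : fieldType) (n : nat).
Implicit Types (M : 'M[F]_n) (v : 'cV[F]_n).

(* For a symmetric matrix in characteristic 2, the bilinear form [x^T M y] is
   alternating exactly when the diagonal of [M] vanishes. *)
Definition alternating_mx M := [forall i, M i i == 0].

Definition strict_upper_mx M : 'M[F]_n := \matrix_(i, j) if (i < j)%N then M i j else 0.

Lemma alternating_mx_split M : M^T = M -> alternating_mx M ->
  M = strict_upper_mx M + (strict_upper_mx M)^T.
Proof.
move=> MT /forallP M0; apply/matrixP => i j; rewrite !mxE.
case: ltngtP => [_|_|/val_inj <-]; rewrite ?addr0 ?add0r //.
  by rewrite -[in LHS]MT mxE.
exact/eqP/M0.
Qed.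

Lemma delta_form_mx M i j :
  (delta_mx i 0 : 'cV_n)^T *m M *m (delta_mx j 0 : 'cV_n) = (M i j)%:M.
Proof.
rewrite trmx_delta -rowE -colE; apply/matrixP => a b.
by rewrite !ord1 !mxE mulr1n.
Qed.

Hypothesis ch : 2%N \in [pchar F].

Lemma addmx_pchar2 p q (X : 'M[F]_(p, q)) : X + X = 0.
Proof. by apply/matrixP => i j; rewrite !mxE addrr_pchar2. Qed.

(* Off the diagonal the form [x^T M x] counts every term twice. *)
Lemma alternating_mx_form0 M v : M^T = M -> alternating_mx M -> v^T *m M *m v = 0.
Proof.
move=> MT Malt; rewrite (alternating_mx_split MT Malt) mulmxDr mulmxDl.
set x := v^T *m _ *m v.
have xT : x^T = x by rewrite [in LHS](mx11_scalar x) tr_scalar_mx -mx11_scalar.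
have -> : v^T *m (strict_upper_mx M)^T *m v = x^T.
  by rewrite /x !trmx_mul trmxK mulmxA.
by rewrite xT addmx_pchar2.
Qed.

Lemma nonalternating_form M v : M^T = M -> v^T *m M *m v != 0 -> ~~ alternating_mx M.
Proof. by move=> MT; apply: contraNN => /(alternating_mx_form0 v MT) ->. Qed.

Lemma dotmx_pchar2 v : v^T *m v = ((\sum_i v i 0) ^+ 2)%:M.
Proof.
apply/matrixP => a b; rewrite !ord1 !mxE mulr1n.
rewrite -(pFrobenius_autE ch) rmorph_sum; apply: eq_bigr => i _.
by rewrite /= pFrobenius_autE mxE expr2.
Qed.

End SymmetricMatrices.

Section OrthonormalFactor.
Variables (F : fieldType) (N : nat).
Hypothesis ch : 2%N \in [pchar F].
Implicit Types (P Q : 'M[F]_N) (u v : 'cV[F]_N).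

Lemma sym_idem_form P v v' : P^T = P -> P *m P = P ->
  (P *m v)^T *m (P *m v') = v^T *m P *m v'.
Proof. by move=> PT PP; rewrite trmx_mul PT !mulmxA -(mulmxA _ P P) PP. Qed.

Lemma sym_idem_sub_rank_one P u : P^T = P -> P *m P = P -> P *m u = u ->
    u^T *m u = 1%:M ->
  let Q := P - u *m u^T in
  [/\ Q^T = Q, Q *m Q = Q, Q *m u = 0, P *m Q = Q & Q *m P = Q].
Proof.
move=> PT PP Pu uu Q.
have uP : u^T *m P = u^T by rewrite -PT -trmx_mul Pu.
have Qu : Q *m u = 0 by rewrite mulmxBl Pu -mulmxA uu mulmx1 subrr.
have QP : Q *m P = Q by rewrite mulmxBl PP -mulmxA uP.
split => //.
- by rewrite linearB /= PT trmx_mul trmxK.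
- by rewrite {1}/Q mulmxBr QP mulmxA Qu mul0mx subr0.
- by rewrite mulmxBr PP mulmxA Pu.
Qed.

Lemma mxrank_sub_rank_one P u : P^T = P -> P *m P = P -> P *m u = u ->
  u^T *m u = 1%:M -> \rank (P - u *m u^T) = (\rank P).-1.
Proof.
move=> PT PP Pu uu; have [_ _ Qu _ QP] := sym_idem_sub_rank_one PT PP Pu uu.
have lt_rank : (\rank (P - u *m u^T)%R < \rank P)%N.
  apply: rank_ltmx; rewrite ltmxE -{1}QP submxMl /=.
  apply/negP => /submxP [D PD]; move/eqP: uu; apply/negP.
  by rewrite -Pu PD -mulmxA Qu mulmx0 trmx0 mul0mx eq_sym matrix_nonzero1.
have le_rank : (\rank P <= \rank (P - u *m u^T)%R + \rank (u *m u^T))%N.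
  by rewrite -{1}(subrK (u *m u^T) P) mxrank_add.
have rank_uu : (\rank (u *m u^T) <= 1)%N.
  exact: leq_trans (mxrankM_maxl _ _) (rank_leq_col u).
lia.
Qed.

Lemma sym_idem_unit_vector P : P^T = P -> P *m P = P -> ~~ alternating_mx P ->
  exists2 u : 'cV_N, P *m u = u & u^T *m u = 1%:M.
Proof.
move=> PT PP /forallPn [i /= Pii].
pose v := P *m (delta_mx i 0 : 'cV_N); pose c := \sum_k v k 0.
have vv : v^T *m v = (c ^+ 2)%:M by rewrite dotmx_pchar2.
have c_neq0 : c != 0.
  apply: contraNneq Pii => c0; move: vv.
  rewrite sym_idem_form // delta_form_mx c0 expr0n /= => /matrixP /(_ 0 0).
  by rewrite !mxE !mulr1n => ->.
exists (c^-1 *: v); first by rewrite -scalemxAr mulmxA PP.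
rewrite -scalemxAr [(_ *: v)^T]linearZ /= -scalemxAl vv !scale_scalar_mx.
by congr _%:M; field.
Qed.

Lemma alternating_hyperbolic_pair Q : Q^T = Q -> Q *m Q = Q -> alternating_mx Q ->
    Q != 0 ->
  exists x y : 'cV_N,
    [/\ Q *m x = x, Q *m y = y, x^T *m x = 0, y^T *m y = 0 & x^T *m y = 1%:M].
Proof.
move=> QT QQ Qalt /matrix0Pn [a [b Qab]].
pose x := Q *m (delta_mx b 0 : 'cV_N).
pose y := (Q a b)^-1 *: (Q *m (delta_mx a 0 : 'cV_N)).
exists x, y; split.
- by rewrite mulmxA QQ.
- by rewrite -scalemxAr mulmxA QQ.
- by rewrite sym_idem_form // alternating_mx_form0.
- rewrite -scalemxAr [(_ *: _)^T]linearZ /= -scalemxAl sym_idem_form //.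
  by rewrite alternating_mx_form0 // !scaler0.
rewrite -scalemxAr sym_idem_form // delta_form_mx scale_scalar_mx.
by rewrite -[in Q b a]QT mxE mulVf.
Qed.

(* If [P - u u^T] is alternating but nonzero, a hyperbolic pair (x, y) in its
   image lets us replace [u] by [u + x]; [u + y] then witnesses non-alternation. *)
Lemma sym_idem_peel_unit_vector P : P^T = P -> P *m P = P -> ~~ alternating_mx P ->
  exists u : 'cV_N, [/\ P *m u = u, u^T *m u = 1%:M &
    alternating_mx (P - u *m u^T) -> P - u *m u^T = 0].
Proof.
move=> PT PP Pnalt; have [u0 Pu0 u0u0] := sym_idem_unit_vector PT PP Pnalt.
have [QT QQ Qu0 PQ _] := sym_idem_sub_rank_one PT PP Pu0 u0u0.
set Q := P - u0 *m u0^T in QT QQ Qu0 PQ *.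
have [Qalt|Qnalt] := boolP (alternating_mx Q); last first.
  by exists u0; split=> // /(negP Qnalt).
have [Q0|Q_neq0] := eqVneq Q 0; first by exists u0.
have [x [y [Qx Qy xx yy xy]]] := alternating_hyperbolic_pair QT QQ Qalt Q_neq0.
have u0Q : u0^T *m Q = 0 by rewrite -QT -trmx_mul Qu0 trmx0.
have u0x : u0^T *m x = 0 by rewrite -Qx mulmxA u0Q mul0mx.
have u0y : u0^T *m y = 0 by rewrite -Qy mulmxA u0Q mul0mx.
have xu0 : x^T *m u0 = 0 by rewrite -Qx trmx_mul QT -mulmxA Qu0 mulmx0.
have yu0 : y^T *m u0 = 0 by rewrite -Qy trmx_mul QT -mulmxA Qu0 mulmx0.
have Px : P *m x = x by rewrite -Qx mulmxA PQ.
have Py : P *m y = y by rewrite -Qy mulmxA PQ.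
exists (u0 + x); split.
- by rewrite mulmxDr Pu0 Px.
- by rewrite [_^T]linearD /= mulmxDl !mulmxDr u0u0 u0x xu0 xx !addr0.
apply/contraTeq => _; apply: (nonalternating_form ch (v := u0 + y)).
  by rewrite linearB /= PT trmx_mul trmxK.
have zz : (u0 + y)^T *m (u0 + y) = 1%:M.
  by rewrite [_^T]linearD /= mulmxDl !mulmxDr u0u0 u0y yu0 yy !addr0.
have uz : (u0 + x)^T *m (u0 + y) = 0.
  by rewrite [_^T]linearD /= mulmxDl !mulmxDr u0u0 u0y xu0 xy addr0 add0r addmx_pchar2.
rewrite mulmxBr mulmxBl -mulmxA mulmxDr Pu0 Py zz -!mulmxA uz !mulmx0 subr0.
exact: matrix_nonzero1.
Qed.

Lemma sym_idem_orthonormal_factor k P : P^T = P -> P *m P = P -> \rank P = k ->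
    (alternating_mx P -> P = 0) ->
  exists U : 'M[F]_(N, k), U^T *m U = 1%:M /\ U *m U^T = P.
Proof.
elim: k P => [|k IHk] P PT PP rankP Palt.
  exists 0; split; first by rewrite [LHS]flatmx0 [RHS]flatmx0.
  by rewrite mul0mx; apply/esym/eqP; rewrite -mxrank_eq0 rankP.
have Pnalt : ~~ alternating_mx P.
  by apply: contraPN rankP => /Palt ->; rewrite mxrank0.
have [u [Pu uu Qalt]] := sym_idem_peel_unit_vector PT PP Pnalt.
have [QT QQ Qu _ _] := sym_idem_sub_rank_one PT PP Pu uu.
have rankQ : \rank (P - u *m u^T) = k by rewrite mxrank_sub_rank_one // rankP.
have [V [VV VVT]] := IHk _ QT QQ rankQ Qalt.
have QV : (P - u *m u^T) *m V = V by rewrite -VVT -mulmxA VV mulmx1.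
have Vu : V^T *m u = 0 by rewrite -QV trmx_mul QT -mulmxA Qu mulmx0.
have uV : u^T *m V = 0 by rewrite -[u^T *m V]trmxK trmx_mul trmxK Vu trmx0.
exists (row_mx u V).
change ((row_mx u V)^T *m row_mx u V = 1%:M :> 'M_(1 + k) /\
        row_mx u V *m (row_mx u V)^T = P); split.
  rewrite tr_row_mx mul_col_row uu uV Vu VV.
  exact: (esym (scalar_mx_block 1 k 1)).
by rewrite tr_row_mx mul_row_col VVT addrC subrK.
Qed.

End OrthonormalFactor.

Section MatrixUnits.
Variables (F : fieldType) (n : nat).
Implicit Types (C K X : 'M[F]_n.+1).

Lemma mulmx_delta_mx_col X k :
  X *m delta_mx k 0 = \sum_i X i k *: (delta_mx i 0 : 'M_n.+1).
Proof.
apply/matrixP => i j; rewrite summxE !mxE (bigD1 k) //=.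
rewrite big1 => [|t /negbTE tk]; last by rewrite mxE tk mulr0.
rewrite (bigD1 i) //= big1 => [|t /negbTE ti]; last by rewrite !mxE eq_sym ti mulr0.
by rewrite !mxE !eqxx !addr0.
Qed.

Lemma delta_mx_mulmx_entry X k i j :
  ((delta_mx k 0 : 'M_n.+1) *m X) i j = (i == k)%:R * X 0 j.
Proof.
rewrite !mxE (bigD1 0) //= big1 => [|t /negbTE t0]; last by rewrite mxE t0 andbF mul0r.
by rewrite mxE eqxx andbT addr0.
Qed.

Lemma mulmx_delta_mx_entry K X k i j :
  (K *m (delta_mx k 0 : 'M_n.+1) *m X) i j = K i k * X 0 j.
Proof.
rewrite mulmx_delta_mx_col mulmx_suml summxE (bigD1 i) //= big1 => [|t /negbTE ti].
  by rewrite -scalemxAl mxE delta_mx_mulmx_entry eqxx mul1r addr0.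
by rewrite -scalemxAl mxE delta_mx_mulmx_entry eq_sym ti mul0r mulr0.
Qed.

Lemma mx_central_scalar C : (forall X, C *m X = X *m C) -> C = (C 0 0)%:M.
Proof.
move=> Cc; apply/matrixP => k i; have := mulmx_delta_mx_entry C 1%:M i k 0.
by rewrite mulmx1 Cc delta_mx_mulmx_entry !mxE eqxx mulr1 => <-; rewrite mulr_natl.
Qed.

End MatrixUnits.

Section MatrixInvolution.
Variables (F : fieldType) (n : nat) (tau : 'M[F]_n.+1 -> 'M[F]_n.+1).
Hypothesis tau_inv : involution1 tau.
Implicit Types (B X Y : 'M[F]_n.+1).

HB.instance Definition _ :=
  GRing.isLinear.Build F 'M[F]_n.+1 'M[F]_n.+1 *:%R tau (involution1_linear tau_inv).

Lemma involution1_mulmx X Y : tau (X *m Y) = tau Y *m tau X.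
Proof. by case: tau_inv => _ tauM _; rewrite mulmxE tauM. Qed.

Lemma involution1K : involutive tau.
Proof. by case: tau_inv. Qed.

(* [B] is read off row [c] of the images of the matrix units [delta_mx k 0]. *)
Lemma involution1_mx_adjoint :
  exists2 B, B \in unitmx & forall X, tau X = invmx B *m X^T *m B.
Proof.
have /matrix0Pn [c [r tau00cr]] : tau (delta_mx 0 0) != 0.
  apply/eqP => /(congr1 tau); rewrite involution1K linear0 => /matrixP /(_ 0 0).
  by rewrite !mxE eqxx => /eqP; rewrite oner_eq0.
pose B := \matrix_(k, l) tau (delta_mx k 0) c l.
have BtauX X : B *m tau X = X^T *m B.
  apply/matrixP => k l.
  have -> : (B *m tau X) k l = (tau (delta_mx k 0) *m tau X) c l.
    by rewrite !mxE; apply: eq_bigr => m _; rewrite mxE.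
  rewrite -involution1_mulmx mulmx_delta_mx_col linear_sum summxE !mxE.
  by apply: eq_bigr => m _; rewrite linearZ !mxE.
have B_unit : B \in unitmx.
  rewrite -row_free_unit -kermx_eq0; apply/eqP/matrixP => j k; rewrite [RHS]mxE.
  have : (kermx B *m delta_mx k 0 *m B) j r = 0.
    by rewrite -trmx_delta -mulmxA -BtauX mulmxA mulmx_ker mul0mx mxE.
  rewrite mulmx_delta_mx_entry => /eqP.
  by rewrite mulf_eq0 [B 0 r]mxE (negbTE tau00cr) orbF => /eqP.
by exists B => // X; rewrite -mulmxA -BtauX mulKmx.
Qed.

Hypothesis ch : 2%N \in [pchar F].

Lemma involution1_mx_adjoint_sym :
  exists B, [/\ B \in unitmx, B^T = B & forall X, tau X = invmx B *m X^T *m B].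
Proof.
have [B B_unit tauE] := involution1_mx_adjoint.
have BT_unit : B^T \in unitmx by rewrite unitmx_tr.
pose C := invmx B *m B^T.
have C_central X : C *m X = X *m C.
  have := involution1K X; rewrite !tauE !trmx_mul !trmxK trmx_inv => tauK.
  by rewrite -{2}tauK /C !mulmxA mulmxK // mulmxKV.
have [l Cl] : exists l, C = l%:M by exists (C 0 0); exact: mx_central_scalar.
have BT : B^T = l *: B by rewrite -(mulKVmx B_unit B^T) -/C Cl mul_mx_scalar.
have l2 : l ^+ 2 = 1.
  have := congr1 (mulmx (invmx B)) (congr1 trmx BT).
  rewrite trmxK linearZ /= BT scalerA -scalemxAr mulVmx // => /matrixP /(_ 0 0).
  by rewrite !mxE eqxx /= !mulr1n mulr1 expr2 => <-.
have l1 : l = 1.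
  have : (l + 1) ^+ 2 = 0.
    by rewrite sqrrD l2 mulrn_pchar // expr1n addr0 addrr_pchar2.
  by move/eqP; rewrite expf_eq0 /= addr_eq0 oppr_pchar2 // => /eqP.
by exists B; split; rewrite // BT l1 scale1r.
Qed.

Lemma orthogonal_involution_mx_fixed_idem : orthogonal_involution tau ->
  exists u w : 'cV[F]_n.+1, w^T *m u = 1%:M /\ tau (u *m w^T) = u *m w^T.
Proof.
case=> _ tau_nsymp; have [B [B_unit BT tauE]] := involution1_mx_adjoint_sym.
have /forallPn [i /= Bii] : ~~ alternating_mx B.
  apply/negP => Balt; apply: tau_nsymp; set U := strict_upper_mx B.
  exists (invmx B *m U^T).
  rewrite tauE trmx_mul trmxK trmx_inv BT -mulmxA mulmxKV // -mulmxDr addrC.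
  by rewrite -(alternating_mx_split BT Balt) mulVmx.
pose u : 'cV[F]_n.+1 := delta_mx i 0; pose w := (B i i)^-1 *: (B *m u).
exists u, w; split.
  rewrite [w^T]linearZ /= -scalemxAl trmx_mul BT delta_form_mx.
  by rewrite scale_scalar_mx mulVf.
rewrite tauE trmx_mul trmxK /w [(_ *: _)^T]linearZ /= -scalemxAl -scalemxAr -scalemxAl.
by rewrite -scalemxAr trmx_mul BT !mulmxA mulVmx // mul1mx.
Qed.

End MatrixInvolution.

Section IdempotentRank.
Variable F : fieldType.

Lemma mxrank_idem_compl N (P : 'M[F]_N) : P *m P = P ->
  (\rank P + \rank (1%:M - P)%R = N)%N.
Proof.
move=> PP; apply/eqP; rewrite eqn_leq; apply/andP; split.
  have := mxrank_mul_min P (1%:M - P).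
  by rewrite mulmxBr mulmx1 PP subrr mxrank0 leqn0 subn_eq0.
by rewrite addnC -{1}(mxrank1 F N) -{1}(subrK P 1%:M) mxrank_add.
Qed.

Lemma mxrank_mul_swap m n (X : 'M[F]_(m, n)) (Y : 'M[F]_(n, m)) :
  X *m Y *m X = X -> Y *m X *m Y = Y -> \rank (X *m Y) = \rank (Y *m X).
Proof.
move=> XYX YXY; apply/eqP; rewrite eqn_leq; apply/andP; split.
  by apply: leq_trans (mxrankM_maxl X Y) _; rewrite -{1}XYX -mulmxA mxrankM_maxr.
by apply: leq_trans (mxrankM_maxl Y X) _; rewrite -{1}YXY -mulmxA mxrankM_maxr.
Qed.

Lemma ord2_cases (i : 'I_2) : i = 0 \/ i = 1.
Proof. by case: i => [[|[|//]]] lti; [left|right]; apply/val_inj. Qed.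

Lemma big_ord2 (R : nmodType) (G : 'I_2 -> R) : \sum_(i < 2) G i = G 0 + G 1.
Proof. by rewrite big_ord_recr big_ord1; congr (G _ + G _); apply/val_inj. Qed.

(* In dimension 2 the complement of a rank-one idempotent is again rank one:
   take [u'] orthogonal to [w] and [w'] orthogonal to [u]. *)
Lemma mx2_rank_one_compl (u w : 'cV[F]_2) : w^T *m u = 1%:M ->
  exists u' w' : 'cV[F]_2, w'^T *m u' = 1%:M /\ 1%:M - u *m w^T = u' *m w'^T.
Proof.
move=> /matrixP /(_ 0 0); rewrite !mxE big_ord2 !mxE /= mulr1n => wu.
exists (\col_i (if i == 0 then w 1 0 else - w 0 0)),
       (\col_i (if i == 0 then u 1 0 else - u 0 0)); split.
  apply/matrixP => i j; rewrite !ord1 !mxE big_ord2 !mxE /= mulr1n -wu; ring.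
apply/matrixP => i j; rewrite !mxE !big_ord1 !mxE.
by case: (ord2_cases i) => ->; case: (ord2_cases j) => -> /=;
  rewrite ?mulr1n ?mulr0n -?wu; ring.
Qed.

End IdempotentRank.

Section Compression.
Variables (F : fieldType) (A : falgType F) (s : A -> A) (N k : nat).
Variables (psi : A -> 'M[F]_N) (U : 'M[F]_(N, k)) (r : 'M[F]_N -> A).
Hypotheses (psi_linear : linear psi) (psiM : forall a b, psi (a * b) = psi a *m psi b)
  (psi1 : psi 1 = 1%:M) (psiT : forall a, psi (s a) = (psi a)^T).
Hypothesis UtU : U^T *m U = 1%:M.
Let P := U *m U^T.
Hypotheses (psiP : forall a, psi a *m P = P *m psi a)
  (psiP_inj : forall a, psi a *m P = 0 -> a = 0)
  (psiP_onto : forall Y, P *m Y *m P = psi (r Y) *m P).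

HB.instance Definition _ := GRing.isLinear.Build F A 'M[F]_N *:%R psi psi_linear.

Let PU : P *m U = U. Proof. by rewrite -mulmxA UtU mulmx1. Qed.
Let PP : P *m P = P. Proof. by rewrite {2}/P mulmxA PU. Qed.

Lemma compression_iso_transpose : iso_transpose s k.
Proof.
pose g a := U^T *m psi a *m U.
have psiU a : psi a *m U = P *m psi a *m U by rewrite -psiP -mulmxA PU.
have psiPE a : psi a *m P = U *m g a *m U^T.
  by rewrite -{1}PP mulmxA psiP /g /P !mulmxA.
have g_inj : injective g.
  move=> a b gab; apply/eqP; rewrite -subr_eq0; apply/eqP/psiP_inj.
  have gB : g (a - b) = g a - g b by rewrite /g linearB /= mulmxBr mulmxBl.
  by rewrite psiPE gB gab subrr mulmx0 mul0mx.
have rK : cancel (fun Y => r (U *m Y *m U^T)) g.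
  move=> Y; rewrite /g -[in X in _ *m X = _]PU mulmxA -(mulmxA U^T) -psiP_onto.
  by rewrite !mulmxA UtU mul1mx UtU mul1mx -mulmxA UtU mulmx1 -mulmxA UtU mulmx1.
exists g; split.
- by exists (fun Y => r (U *m Y *m U^T)) => // a; apply: g_inj; rewrite rK.
- by move=> c x y; rewrite /g linearP mulmxDr mulmxDl -scalemxAr -scalemxAl.
- by move=> x y; rewrite /g psiM -!mulmxA [in LHS]psiU !mulmxA.
- by rewrite /g psi1 mulmx1.
- by move=> x; rewrite /g psiT !trmx_mul trmxK mulmxA.
Qed.

End Compression.

Section TensorSplitting.
Variables (F : fieldType) (A : falgType F) (sigma : A -> A) (tau : 'M[F]_2 -> 'M[F]_2).
Variables (N : nat) (f : 'M[A]_2 -> 'M[F]_N) (finv : 'M[F]_N -> 'M[A]_2).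
Hypotheses (ch : 2%N \in [pchar F]) (sigma_orth : orthogonal_involution sigma)
  (tau_inv : involution1 tau).
Hypotheses (fK : cancel f finv) (finvK : cancel finv f)
  (fD : forall M M', f (M + M') = f M + f M')
  (fZ : forall (c : F) M, f (map_mx (fun a => c *: a) M) = c *: f M)
  (fM : forall M M', f (M *m M') = f M *m f M')
  (f1 : f 1%:M = 1%:M)
  (fT : forall M, f (tensor_inv2 sigma tau M) = (f M)^T).
Variables (u w : 'cV[F]_2).
Hypotheses (wu : w^T *m u = 1%:M) (tau_uw : tau (u *m w^T) = u *m w^T).

HB.instance Definition _ :=
  GRing.isLinear.Build F A A *:%R sigma (involution1_linear sigma_orth.1).
HB.instance Definition _ :=
  GRing.isLinear.Build F 'M[F]_2 'M[F]_2 *:%R tau (involution1_linear tau_inv).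

Let f0 : f 0 = 0.
Proof. by apply: (@addrI _ (f 0)); rewrite -fD !addr0. Qed.

HB.instance Definition _ := GRing.isNmodMorphism.Build _ _ f (f0, fD).

Lemma tensor_inv2_scalar a : tensor_inv2 sigma tau a%:M = (sigma a)%:M.
Proof.
have tau1 : tau 1%:M = 1%:M := involution1_1 tau_inv.
rewrite {1}mx1_sum_delta big_ord2 linearD /= in tau1.
apply/matrixP => k l; rewrite !mxE !big_ord2 !mxE /= !mulr1n !mulr0n linear0.
rewrite !scaler0 addr0 add0r -scalerDl.
by have /matrixP /(_ k l) := tau1; rewrite !mxE => ->; rewrite scaler_nat.
Qed.

Lemma tensor_inv2_alg X :
  tensor_inv2 sigma tau (map_mx (in_alg A) X) = map_mx (in_alg A) (tau X).
Proof.
apply/matrixP => k l; rewrite [RHS]mxE [in RHS](matrix_sum_delta X).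
rewrite linear_sum summxE raddf_sum !mxE; apply: eq_bigr => i _.
rewrite linear_sum summxE raddf_sum; apply: eq_bigr => j _.
by rewrite linearZ !mxE /= (involution1_alg sigma_orth.1) [X i j * _]mulrC -scalerA.
Qed.

(* [psi] and [phi] are the restrictions of [f] to the tensor factors
   [A (x) 1] and [1 (x) M_2(F)]. *)
Definition psi (a : A) : 'M[F]_N := f a%:M.
Definition phi (X : 'M[F]_2) : 'M[F]_N := f (map_mx (in_alg A) X).

Lemma psi_linear : linear psi.
Proof.
move=> c a b; rewrite /psi -fZ -fD; congr f.
by apply/matrixP => i j; rewrite !mxE mulrnDl scalerMnr.
Qed.

HB.instance Definition _ := GRing.isLinear.Build F A 'M[F]_N *:%R psi psi_linear.

Lemma psiM a b : psi (a * b) = psi a *m psi b.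
Proof. by rewrite /psi scalar_mxM fM. Qed.

Lemma psiT a : psi (sigma a) = (psi a)^T.
Proof. by rewrite /psi -tensor_inv2_scalar fT. Qed.

Lemma phiM X Y : phi (X *m Y) = phi X *m phi Y.
Proof. by rewrite /phi map_mxM fM. Qed.

Lemma phiT X : phi (tau X) = (phi X)^T.
Proof. by rewrite /phi -tensor_inv2_alg fT. Qed.

Lemma psi_phiC a X : psi a *m phi X = phi X *m psi a.
Proof.
rewrite /psi /phi -!fM; congr f; apply/matrixP => i j; rewrite !mxE !big_ord2 !mxE.
by case: (ord2_cases i) => ->; case: (ord2_cases j) => -> /=;
  rewrite ?mulr1n ?mulr0n ?mul0r ?mulr0 ?add0r ?addr0 mulr_algl mulr_algr.
Qed.

Let e := u *m w^T.
Let P := phi e.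

Lemma P_sym : P^T = P.
Proof. by rewrite /P -phiT tau_uw. Qed.

Lemma P_idem : P *m P = P.
Proof. by rewrite /P -phiM /e mulmxA -(mulmxA u) wu mulmx1. Qed.

(* [corner_coef M] is the scalar [w^T M u] of [A], so that [e M e = (w^T M u) e]. *)
Definition corner_coef (M : 'M[A]_2) : A :=
  \sum_p \sum_q (w p 0 * u q 0) *: M p q.

Lemma corner_mx M :
  map_mx (in_alg A) e *m M *m map_mx (in_alg A) e
  = (corner_coef M)%:M *m map_mx (in_alg A) e.
Proof.
apply/matrixP => k l; rewrite mul_scalar_mx [LHS]mxE [RHS]mxE mulr_suml.
under eq_bigr => q _ do rewrite mxE mulr_suml.
rewrite exchange_big /=; apply: eq_bigr => p _.
rewrite mulr_suml; apply: eq_bigr => q _.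
rewrite !mxE /= mulr_algl !mulr_algr !scalerA; congr (_ *: _).
by rewrite !big_ord1 !mxE; ring.
Qed.

Lemma P_corner Y : P *m Y *m P = psi (corner_coef (finv Y)) *m P.
Proof. by rewrite -[in LHS](finvK Y) /P /phi /psi -!fM corner_mx. Qed.

Lemma psiP_inj a : psi a *m P = 0 -> a = 0.
Proof.
have /matrix0Pn [k [l ekl]] : e != 0.
  have wue : w^T *m e *m u = 1%:M by rewrite /e mulmxA wu mul1mx wu.
  apply: contra_eq_neq wue => ->; rewrite mulmx0 mul0mx eq_sym.
  exact: matrix_nonzero1.
rewrite /psi /P /phi -fM -f0 mul_scalar_mx => /(can_inj fK) /matrixP /(_ k l).
rewrite [LHS]mxE [X in _ * X = _]mxE [RHS]mxE mulr_algr => /eqP.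
by rewrite scaler_eq0 (negbTE ekl) => /eqP.
Qed.

Lemma rank_P : (\rank P + \rank P = N)%N.
Proof.
have [u' [w' [w'u' compl_e]]] := mx2_rank_one_compl wu.
pose X := phi (u *m w'^T); pose Y := phi (u' *m w^T).
have XY : X *m Y = P by rewrite -phiM mulmxA -(mulmxA u) w'u' mulmx1.
have YX : Y *m X = 1%:M - P.
  rewrite -phiM mulmxA -(mulmxA u') wu mulmx1 -compl_e.
  by rewrite /phi map_mxB map_mx1 raddfB /= f1.
have XYX : X *m Y *m X = X by rewrite XY /P -phiM /e mulmxA -(mulmxA u) wu mulmx1.
have YXY : Y *m X *m Y = Y.
  by rewrite -mulmxA XY /P -phiM /e mulmxA -(mulmxA u') wu mulmx1.
by rewrite {2}(_ : P = X *m Y) // mxrank_mul_swap // YX mxrank_idem_compl // P_idem.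
Qed.

Lemma P_nonalternating : ~~ alternating_mx P.
Proof.
apply/negP => Palt; apply: sigma_orth.2.
set U0 := strict_upper_mx P; exists (corner_coef (finv U0)).
set x := corner_coef _; have PU0P : P *m U0 *m P = psi x *m P := P_corner U0.
have P_halves : psi x *m P + psi (sigma x) *m P = P.
  have -> : psi (sigma x) *m P = (P *m U0 *m P)^T.
    by rewrite PU0P psiT psi_phiC trmx_mul P_sym.
  rewrite -PU0P !trmx_mul P_sym -mulmxA -mulmxDr -mulmxDl.
  by rewrite -(alternating_mx_split P_sym Palt) !P_idem.
apply/eqP; rewrite -subr_eq0; apply/eqP/psiP_inj.
by rewrite raddfB raddfD /= mulmxBl mulmxDl P_halves /psi f1 mul1mx subrr.
Qed.

Lemma tensor_splitting_iso : exists2 k, (k + k = N)%N & iso_transpose sigma k.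
Proof.
have [|U [UtU UUt]] := sym_idem_orthonormal_factor ch P_sym P_idem (erefl (\rank P)).
  by move/(negP P_nonalternating).
exists (\rank P); first exact: rank_P.
apply: (compression_iso_transpose psi_linear psiM f1 psiT UtU) => [a|a|Y]; rewrite UUt.
- exact: psi_phiC.
- exact: psiP_inj.
- exact: P_corner.
Qed.

End TensorSplitting.

Theorem lemma5p9 (F : fieldType) (A : falgType F) (sigma : A -> A) (n : nat) :
  2%N \in [pchar F] ->
  central_simple A ->
  orthogonal_involution sigma ->
  (exists tau : 'M[F]_2 -> 'M[F]_2,
      orthogonal_involution tau /\ iso_M2A_transpose sigma tau (2 ^ n)) ->
  iso_transpose sigma (2 ^ n.-1).
Proof.
move=> ch _ sigma_orth [tau [tau_orth [f [[finv fK finvK] [fD fZ fM f1 fT]]]]].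
have [u [w [wu tau_uw]]] := orthogonal_involution_mx_fixed_idem tau_orth.1 ch tau_orth.
have [k k2 iso_k] :=
  tensor_splitting_iso ch sigma_orth tau_orth.1 fK finvK fD fZ fM f1 fT wu tau_uw.
suff -> : (2 ^ n.-1)%N = k by [].
by move: k2; case: (n) => [|m] /=; rewrite ?expnS; lia.
Qed.
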